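(* Let $n=4$. List the eight tilings, encoded as 0/1 strings indicating membership of $123,124,134,234$ respectively, in the cyclic order (the octahedral wheel) $0000,1000,1100,1110,1111,0111,0011,0001$ (and back to $0000$). Then the maximal (by inclusion) Condorcet super-domains are exactly: (I) the sets of five cyclically consecutive tilings in this cyclic order, and (II) the sets consisting of two distinct pairs $\{T,\Lambda\setminus T\}$, $\{T',\Lambda\setminus T'\}$ of opposite tilings. Moreover, if $\mathbf D$ is a set of one of these two types, then for every finite set $V$ of odd cardinality and every family $(T_v)_{v\in V}$ of tilings in $\mathbf D$, $sm((T_v)_{v\in V})=T_w$ for some $w\in V$.
   Context: Here $n=4$, $\Lambda$ is the set of 3-element subsets $\{123,124,134,234\}$ of $\{1,2,3,4\}$, and a tiling is a subset $T\subseteq\Lambda$ which is an initial or final segment of the sequence $(123,124,134,234)$ (empty set and $\Lambda$ allowed); there are exactly eight tilings. For a finite set $V$ of odd cardinality and tilings $(T_v)_{v\in V}$, $sm((T_v)_{v\in V})$ is the set of triples lying in $T_v$ for more than $|V|/2$ indices $v$. A set $\mathbf D$ of tilings is a Condorcet super-domain if for every finite $V$ of odd cardinality and every family $(T_v)_{v\in V}$ with all $T_v\in\mathbf D$, $sm((T_v)_{v\in V})$ is a tiling. *)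

From mathcomp Require Import all_boot.
Set Implicit Arguments. Unset Strict Implicit. Unset Printing Implicit Defensive.

(* Lambda = the four 3-subsets of {1,2,3,4}, encoded as 'I_4 with
   0 = 123, 1 = 124, 2 = 134, 3 = 234 (the order of the sequence). *)
Notation Lambda := 'I_4.

Definition tiling (T : {set Lambda}) : Prop :=
  exists k : nat, T = [set i : Lambda | i < k] \/ T = [set i : Lambda | k <= i].

Definition sm (V : finType) (P : V -> {set Lambda}) : {set Lambda} :=
  [set i : Lambda | #|V| < 2 * #|[set v | i \in P v]|].

Definition condorcet (D : {set {set Lambda}}) : Prop :=
  (forall T, T \in D -> tiling T) /\
  forall (V : finType) (P : V -> {set Lambda}),
    odd #|V| -> (forall v, P v \in D) -> tiling (sm P).

Definition maximal_condorcet (D : {set {set Lambda}}) : Prop :=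
  condorcet D /\
  forall D' : {set {set Lambda}}, condorcet D' -> D \subset D' -> D' = D.

(* The octahedral wheel 0000,1000,1100,1110,1111,0111,0011,0001 (cyclic). *)
Definition wheel (n : nat) : {set Lambda} :=
  let k := n %% 8 in
  if k <= 4 then [set i : Lambda | i < k] else [set i : Lambda | k - 4 <= i].

Definition typeI (D : {set {set Lambda}}) : Prop :=
  exists s : nat, D = [set wheel (s + j) | j : 'I_5].

Definition typeII (D : {set {set Lambda}}) : Prop :=
  exists T T' : {set Lambda}, [/\ tiling T, tiling T', T' != T, T' != ~: T &
    D = [set T; ~: T; T'; ~: T']].

From mathcomp Require Import all_boot zify.
Set Implicit Arguments. Unset Strict Implicit. Unset Printing Implicit Defensive.

(* The eight tilings are the positions of the octahedral wheel, an 8-cycle on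
   which the tilings containing a fixed triple form a half circle, so that
   complementation is the rotation by four.  On five consecutive positions
   every triple is held by an initial or a final segment of them: such a
   profile is single-crossing and the median voter wins.  On two opposite
   pairs the majority is read off from the four multiplicities.  Conversely,
   in a Condorcet domain the majority of any three of its tilings is a tiling,
   and an enumeration of the subsets of the wheel shows that this confines the
   domain to a set of type (I) or (II).  These sets have 5 and 4 elements and a
   window of five positions contains a single opposite pair, so none of them
   contains another. *)

(* The tilings containing [i] sit at the positions [i+1, ..., i+4] (mod 8). *)
Definition wheel_mem (n i : nat) : bool := (n + 7 - i) %% 8 < 4.

Lemma in_wheel n (i : Lambda) : (i \in wheel n) = wheel_mem n i.
Proof.
have := ltn_ord i; rewrite /wheel /wheel_mem.
by case: ifP; rewrite inE => le_n4 lt_i4; apply/idP/idP; lia.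
Qed.

Lemma eq_wheel a b : (wheel a == wheel b) = (a == b %[mod 8]).
Proof.
apply/eqP/eqP => [/setP eq_ab | eq_ab]; last first.
  apply/setP => i; have lt_i4 := ltn_ord i.
  by rewrite !in_wheel /wheel_mem; apply/idP/idP; lia.
have mem_ab i (lt_i4 : i < 4) : wheel_mem a i = wheel_mem b i.
  by rewrite -!(in_wheel _ (Ordinal lt_i4)) eq_ab.
move: (mem_ab 0 isT) (mem_ab 1 isT) (mem_ab 2 isT) (mem_ab 3 isT).
rewrite /wheel_mem; lia.
Qed.

Lemma setC_wheel n : ~: wheel n = wheel (n + 4).
Proof.
apply/setP => i; have lt_i4 := ltn_ord i.
by rewrite inE !in_wheel /wheel_mem; apply/idP/idP; lia.
Qed.

Lemma tiling_wheel n : tiling (wheel n).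
Proof.
by rewrite /wheel; case: ifP => _; [exists (n %% 8); left | exists (n %% 8 - 4); right].
Qed.

Lemma tilingP T : tiling T <-> exists2 n, n < 8 & T = wheel n.
Proof.
split=> [[k [->|->]] | [n _ ->]]; last exact: tiling_wheel.
  exists (minn k 4); first lia.
  apply/setP => i; have lt_i4 := ltn_ord i.
  by rewrite inE in_wheel /wheel_mem; apply/idP/idP; lia.
exists ((minn k 4 + 4) %% 8); first exact: ltn_pmod.
apply/setP => i; have lt_i4 := ltn_ord i.
by rewrite inE in_wheel /wheel_mem; apply/idP/idP; lia.
Qed.

Lemma tilingC T : tiling T -> tiling (~: T).
Proof. by case/tilingP => n _ ->; rewrite setC_wheel; apply: tiling_wheel. Qed.

Section Median.

Variable V : finType.
Hypothesis oddV : odd #|V|.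

Lemma median_exists (f : V -> nat) :
  exists w, forall k, (f w < k) = (#|V| < 2 * #|[set v | f v < k]|).
Proof.
pose below k := #|[set v | f v < k]|.
have below_mono m n : m <= n -> below m <= below n.
  by move=> le_mn; apply/subset_leq_card/subsetP => v; rewrite !inE => /leq_trans; apply.
have below0 : below 0 = 0 by apply: eq_card0 => v; rewrite !inE.
have below_max : below (\max_v f v).+1 = #|V|.
  by rewrite -cardsT; apply: eq_card => v; rewrite !inE ltnS leq_bigmax.
have has_maj : exists k, #|V| < 2 * below k.
  by exists (\max_v f v).+1; rewrite below_max; have := odd_gt0 oddV; lia.
case: (ex_minnP has_maj) => m maj_m min_m.
have m_gt0 : 0 < m by case: m maj_m {min_m} => //; rewrite below0.
have [w fw] : exists w, f w = m.-1.
  case: (boolP [exists w, f w == m.-1]) => [/existsP[w /eqP] | /existsPn none].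
    by exists w.
  have : below m <= below m.-1.
    by apply/subset_leq_card/subsetP => v; rewrite !inE; have := none v; lia.
  by have := min_m m.-1; lia.
exists w => k; apply/idP/idP => [lt_wk | /min_m]; last lia.
by apply: leq_trans maj_m _; rewrite leq_mul2l below_mono ?orbT //; lia.
Qed.

Lemma sm_single_crossing (P : V -> {set Lambda}) (f : V -> nat) :
  (forall i, exists k, (forall v, (i \in P v) = (f v < k)) \/
                       (forall v, (i \in P v) = (k <= f v))) ->
  exists w, sm P = P w.
Proof.
move=> crossing; have [w median] := median_exists f.
exists w; apply/setP => i; rewrite inE.
have [k [seg | seg]] := crossing i; rewrite seg.
  by rewrite median; congr (_ < 2 * _); apply: eq_card => v; rewrite !inE seg.
have -> : [set v | i \in P v] = ~: [set v | f v < k].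
  by apply/setP => v; rewrite !inE seg -leqNgt.
have := cardsC [set v | f v < k]; have := odd_double_half #|V|.
by rewrite oddV (leqNgt k) median; lia.
Qed.

End Median.

Definition wheel_window s : {set {set Lambda}} := [set wheel (s + j) | j : 'I_5].

Lemma card_wheel_window s : #|wheel_window s| = 5.
Proof.
rewrite card_imset ?card_ord // => j j' /eqP; rewrite eq_wheel => /eqP eq_jj'.
by apply: ord_inj; have := ltn_ord j; have := ltn_ord j'; lia.
Qed.

Lemma wheel_window_segment s (i : Lambda) : exists k,
  (forall j, j < 5 -> (i \in wheel (s + j)) = (j < k)) \/
  (forall j, j < 5 -> (i \in wheel (s + j)) = (k <= j)).
Proof.
have := ltn_ord i; case: (ltnP ((s + 7 - i) %% 8) 4) => r4 lt_i4.
  exists (4 - (s + 7 - i) %% 8); left => j lt_j5.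
  by rewrite in_wheel /wheel_mem; apply/idP/idP; lia.
exists (8 - (s + 7 - i) %% 8); right => j lt_j5.
by rewrite in_wheel /wheel_mem; apply/idP/idP; lia.
Qed.

Lemma sm_wheel_window s (V : finType) (P : V -> {set Lambda}) :
  odd #|V| -> (forall v, P v \in wheel_window s) -> exists w, sm P = P w.
Proof.
move=> oddV inW.
have [f Pf] : exists f : V -> 'I_5, forall v, P v = wheel (s + f v).
  apply: (@fin_all_exists V (fun=> 'I_5) (fun v j => P v = wheel (s + j))) => v.
  by case/imsetP: (inW v) => j _ ->; exists j.
apply: (@sm_single_crossing V oddV P (fun v => f v)) => i.
have [k [seg | seg]] := wheel_window_segment s i; exists k; [left | right] => v;
  by rewrite Pf seg.
Qed.

Lemma wheel_window_opposite s n :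
  wheel n \in wheel_window s -> ~: wheel n \in wheel_window s -> n = s %[mod 4].
Proof.
move=> /imsetP[j _ /eqP]; rewrite setC_wheel eq_wheel => /eqP eq_nj.
case/imsetP=> j' _ /eqP; rewrite eq_wheel => /eqP eq_nj'.
by have := ltn_ord j; have := ltn_ord j'; lia.
Qed.

Definition opposite_pairs (T T' : {set Lambda}) : {set {set Lambda}} :=
  [set T; ~: T; T'; ~: T'].

Lemma setC_neq (A : {set Lambda}) : A != ~: A.
Proof. by apply/eqP => /setP/(_ ord0); rewrite inE; case: (ord0 \in A). Qed.

Lemma uniq_opposite_pairs (T T' : {set Lambda}) :
  T' != T -> T' != ~: T -> uniq [:: T; ~: T; T'; ~: T'].
Proof.
move=> neqT neqCT; rewrite /= !inE !negb_or (inj_eq (@setC_inj _)).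
by rewrite !(eq_sym T) !(eq_sym (~: T)) (can2_eq setCK setCK) neqT neqCT !setC_neq.
Qed.

Lemma card_opposite_pairs (T T' : {set Lambda}) :
  T' != T -> T' != ~: T -> #|opposite_pairs T T'| = 4.
Proof.
move=> neqT neqCT; transitivity (size [:: T; ~: T; T'; ~: T']) => //.
rewrite -(card_uniqP (uniq_opposite_pairs neqT neqCT)).
by apply: eq_card => X; rewrite /opposite_pairs !inE -!orbA.
Qed.

Lemma card_preim_sum (V : finType) (T : eqType) (P : V -> T) (s : seq T) (Q : pred T) :
  uniq s -> (forall v, P v \in s) ->
  #|[set v | Q (P v)]| = \sum_(X <- s) #|[set v | P v == X]| * Q X.
Proof.
move=> uniq_s Ps.
have pick_PV v : \sum_(X <- s) (P v == X) * Q X = Q (P v).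
  rewrite (bigD1_seq (P v)) //= eqxx mul1n big1 ?addn0 // => X.
  by rewrite eq_sym => /negbTE ->.
rewrite -sum1dep_card big_mkcond /=.
under eq_bigr => v _ do rewrite -[if _ then _ else _]/(nat_of_bool _) -pick_PV.
rewrite exchange_big; apply: eq_bigr => X _.
by rewrite -big_distrl /=; congr (_ * _); rewrite -sum1dep_card [RHS]big_mkcond.
Qed.

Lemma sm_opposite_pairs (T T' : {set Lambda}) (V : finType) (P : V -> {set Lambda}) :
  T' != T -> T' != ~: T -> odd #|V| -> (forall v, P v \in opposite_pairs T T') ->
  exists w, sm P = P w.
Proof.
move=> neqT neqCT oddV inD.
have uniq4 := uniq_opposite_pairs neqT neqCT.
have Ps v : P v \in [:: T; ~: T; T'; ~: T'].
  by have := inD v; rewrite /opposite_pairs !inE -!orbA.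
pose c X := #|[set v | P v == X]|.
have cardV : #|V| = c T + c (~: T) + c T' + c (~: T').
  by rewrite -cardsT (card_preim_sum predT uniq4 Ps) !big_cons big_nil !muln1 addn0 !addnA.
have card_i i : #|[set v | i \in P v]| =
    c T * (i \in T) + c (~: T) * (i \notin T) + c T' * (i \in T') + c (~: T') * (i \notin T').
  rewrite (card_preim_sum (fun X : {set Lambda} => i \in X) uniq4 Ps).
  by rewrite !big_cons big_nil !inE addn0 !addnA.
have wins X : 0 < c X -> (forall i, (#|V| < 2 * #|[set v | i \in P v]|) = (i \in X)) ->
    exists w, sm P = P w.
  case/card_gt0P => w; rewrite inE => /eqP Pw maj.
  by exists w; apply/setP => i; rewrite inE maj Pw.
have := odd_double_half #|V|; rewrite oddV => oddN.
case: (ltnP #|V| (2 * (c T + c T'))) => ?; case: (ltnP #|V| (2 * (c T + c (~: T')))) => ?;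
  [apply: (wins T) | apply: (wins T') | apply: (wins (~: T')) | apply: (wins (~: T))].
all: try (move=> i; rewrite card_i ?inE; case: (i \in T) (i \in T')); lia.
Qed.

Lemma typeII_notin_wheel_window s (T T' : {set Lambda}) :
  tiling T -> tiling T' -> T' != T -> T' != ~: T ->
  ~~ (opposite_pairs T T' \subset wheel_window s).
Proof.
move=> /tilingP[p _ ->] /tilingP[q _ ->]; rewrite setC_wheel !eq_wheel => neq_qp neq_qp4.
apply/negP => /subsetP sub_s.
have opp n : wheel n \in opposite_pairs (wheel p) (wheel q) ->
    ~: wheel n \in opposite_pairs (wheel p) (wheel q) -> n = s %[mod 4].
  by move=> in_n in_Cn; apply: wheel_window_opposite; apply: sub_s.
have := opp p; have := opp q; rewrite /opposite_pairs !inE !eqxx !orbT.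
move=> /(_ isT isT) + /(_ isT isT).
by move: neq_qp neq_qp4 => /eqP + /eqP; lia.
Qed.

Lemma typeI_typeII_subset_eq D M :
  typeI D \/ typeII D -> typeI M \/ typeII M -> D \subset M -> D = M.
Proof.
case=> [[s ->] | [T [T' [tT tT' neqT neqCT ->]]]];
  case=> [[s' ->] | [U [U' [_ _ neqU neqCU ->]]]] sub; apply/eqP.
- by rewrite eqEcard sub !card_wheel_window.
- by have := subset_leq_card sub; rewrite card_wheel_window card_opposite_pairs.
- by have := typeII_notin_wheel_window s' tT tT' neqT neqCT; rewrite sub.
- by rewrite eqEcard sub !card_opposite_pairs.
Qed.

Lemma typeI_typeII_tiling D T : typeI D \/ typeII D -> T \in D -> tiling T.
Proof.
case=> [[s ->] | [U [U' [tU tU' _ _ ->]]]]; first by case/imsetP=> j _ ->; apply: tiling_wheel.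
by rewrite !inE -!orbA => /or4P[] /eqP ->; try apply: tilingC.
Qed.

Lemma typeI_typeII_sm D (V : finType) (P : V -> {set Lambda}) :
  typeI D \/ typeII D -> odd #|V| -> (forall v, P v \in D) -> exists w, sm P = P w.
Proof.
case=> [[s ->] | [T [T' [_ _ neqT neqCT ->]]]]; first exact: sm_wheel_window.
exact: sm_opposite_pairs.
Qed.

Lemma typeI_typeII_condorcet D : typeI D \/ typeII D -> condorcet D.
Proof.
move=> typeD; split=> [T | V P oddV inD]; first exact: typeI_typeII_tiling.
by have [w ->] := typeI_typeII_sm typeD oddV inD; apply: typeI_typeII_tiling typeD (inD w).
Qed.

Definition majority3_on_wheel (x y z : nat) : bool :=
  has (fun m => all (fun i =>
    (2 <= wheel_mem x i + wheel_mem y i + wheel_mem z i) == wheel_mem m i) (iota 0 4))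
  (iota 0 8).

Lemma condorcet_majority3 D x y z : condorcet D ->
  wheel x \in D -> wheel y \in D -> wheel z \in D -> majority3_on_wheel x y z.
Proof.
move=> [_ condD] Dx Dy Dz.
pose P (v : 'I_3) := nth (wheel x) [:: wheel x; wheel y; wheel z] v.
have /tilingP[m lt_m8 smP] : tiling (sm P).
  by apply: condD => [|[[|[|[|]]]]]; rewrite ?card_ord.
apply/hasP; exists m; first by rewrite mem_iota.
apply/allP => i; rewrite mem_iota => /andP[_ lt_i4].
move/setP/(_ (Ordinal lt_i4)): smP; rewrite inE in_wheel card_ord -sum1dep_card big_mkcond.
rewrite !big_ord_recr big_ord0 /= !in_wheel => <-.
by case: (wheel_mem x i) (wheel_mem y i) (wheel_mem z i) => [] [] [].
Qed.

Definition triple_closed (b : nat -> bool) : bool :=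
  let S := [seq j <- iota 0 8 | b j] in
  all (fun x => all (fun y => all (majority3_on_wheel x y) S) S) S.

Definition in_some_window (b : nat -> bool) : bool :=
  has (fun s => all (fun j => b j ==> ((j + 8 - s) %% 8 < 5)) (iota 0 8)) (iota 0 8).

Definition in_some_opposite_pairs (b : nat -> bool) : bool :=
  has (fun p => has (fun q => (p < q) &&
    all (fun j => b j ==> (j %% 4 \in [:: p; q])) (iota 0 8)) (iota 0 4)) (iota 0 4).

Lemma triple_closed_covered b0 b1 b2 b3 b4 b5 b6 b7
    (b := nth false [:: b0; b1; b2; b3; b4; b5; b6; b7]) :
  triple_closed b ==> in_some_window b || in_some_opposite_pairs b.
Proof. by move: b0 b1 b2 b3 b4 b5 b6 b7 @b; do 8 case; vm_compute. Qed.

Lemma condorcet_subset_typeI_typeII D : condorcet D ->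
  exists2 M, typeI M \/ typeII M & D \subset M.
Proof.
move=> condD; pose b := nth false [seq wheel j \in D | j <- iota 0 8].
have b_wheel j : j < 8 -> b j = (wheel j \in D).
  by move=> lt_j8; rewrite /b (nth_map 0) ?size_iota // nth_iota.
have D_wheel T : T \in D -> exists j, [/\ j < 8, b j & T = wheel j].
  by move=> DT; have /tilingP[j lt_j8 eqT] := condD.1 T DT; exists j; rewrite b_wheel // -eqT.
have closed_b : triple_closed b.
  have inS j : j \in [seq j <- iota 0 8 | b j] -> wheel j \in D.
    by rewrite mem_filter mem_iota => /andP[bj /andP[_ lt_j8]]; rewrite -b_wheel.
  apply/allP => x /inS Dx; apply/allP => y /inS Dy; apply/allP => z /inS Dz.
  exact: condorcet_majority3 condD Dx Dy Dz.
have : in_some_window b || in_some_opposite_pairs b.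
  exact: implyP (triple_closed_covered (wheel 0 \in D) (wheel 1 \in D) (wheel 2 \in D)
    (wheel 3 \in D) (wheel 4 \in D) (wheel 5 \in D) (wheel 6 \in D) (wheel 7 \in D)) closed_b.
case/orP=> [/hasP[s] | /hasP[p]]; rewrite mem_iota => /andP[_ lt_s8].
  move/allP=> win; exists (wheel_window s); first by left; exists s.
  apply/subsetP => T /D_wheel[j [lt_j8 bj ->]].
  have := win j; rewrite mem_iota lt_j8 bj => /(_ isT) /= lt_5.
  by apply/imsetP; exists (Ordinal lt_5) => //; apply/eqP; rewrite eq_wheel /=; apply/eqP; lia.
case/hasP=> q; rewrite mem_iota => /andP[_ lt_q4] /andP[lt_pq /allP pairs].
exists (opposite_pairs (wheel p) (wheel q)).
  right; exists (wheel p), (wheel q); split=> //; try exact: tiling_wheel.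
    by rewrite eq_wheel; apply/eqP; lia.
  by rewrite setC_wheel eq_wheel; apply/eqP; lia.
apply/subsetP => T /D_wheel[j [lt_j8 bj ->]].
have := pairs j; rewrite mem_iota lt_j8 bj !inE => /(_ isT) /=.
by rewrite /opposite_pairs !setC_wheel !eq_wheel; lia.
Qed.

Theorem mainTheorem6 :
  (forall D : {set {set Lambda}}, maximal_condorcet D <-> typeI D \/ typeII D) /\
  (forall D : {set {set Lambda}}, typeI D \/ typeII D ->
     forall (V : finType) (P : V -> {set Lambda}),
       odd #|V| -> (forall v, P v \in D) -> exists w : V, sm P = P w).
Proof.
split=> [D | D typeD V P]; last exact: typeI_typeII_sm.
split=> [[condD maxD] | typeD].
  have [M typeM DM] := condorcet_subset_typeI_typeII condD.
  by rewrite -(maxD M (typeI_typeII_condorcet typeM) DM).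
split=> [|D' condD' DD']; first exact: typeI_typeII_condorcet.
have [M typeM D'M] := condorcet_subset_typeI_typeII condD'.
have DM := typeI_typeII_subset_eq typeD typeM (subset_trans DD' D'M).
by apply/eqP; rewrite eqEsubset DD' andbT DM.
Qed.
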